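(* Let $v$ and $v'$ be distinct false twin vertices of a graph $G$. Then $\tilde\gamma_{gr}^{\times 2}(G-v')\le\tilde\gamma_{gr}^{\times 2}(G)\le\tilde\gamma_{gr}^{\times 2}(G-v')+1$. Moreover, if $S$ is an MDNS of $G$ and $\tilde\gamma_{gr}^{\times 2}(G)=\tilde\gamma_{gr}^{\times 2}(G-v')+1$, then at least one of $v,v'$ belongs to $S$.
   Context: Graphs are finite, simple, undirected; $N(v)$ open and $N[v]$ closed neighborhood; $v,v'$ are false twins if $N(v)=N(v')$. A sequence $S=(v_1,\dots,v_k)$ of distinct vertices is a double neighborhood sequence (DNS) if for each $i$ some $u\in N[v_i]$ satisfies $|\{j<i: u\in N[v_j]\}|\le 1$. An MDNS is a DNS of maximum length; $\tilde\gamma_{gr}^{\times 2}(G)$ is that length. *)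

(* Induced subgraphs are handled by a vertex set V : {set T};
   G itself is V = [set: T], and G - v' is V = [set: T] :\ v'. *)
From mathcomp Require Import all_boot.
Set Implicit Arguments. Unset Strict Implicit. Unset Printing Implicit Defensive.

Section Graph.
Variables (T : finType) (e : rel T).

Definition simple_graph := symmetric e /\ irreflexive e.

Definition Nopen (v : T) : {set T} := [set w | e v w].

Definition Nclosed (V : {set T}) (w : T) : {set T} :=
  [set u in V | (u == w) || e w u].

Definition dns_step (V : {set T}) (prev : seq T) (x : T) : bool :=
  [exists u in Nclosed V x, count (fun w => u \in Nclosed V w) prev <= 1].

Fixpoint dns_aux (V : {set T}) (prev rest : seq T) : bool :=
  if rest is x :: r then dns_step V prev x && dns_aux V (rcons prev x) r
  else true.

Definition is_dns (V : {set T}) (S : seq T) : bool :=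
  [&& uniq S, all (fun x => x \in V) S & dns_aux V [::] S].

Definition has_dns_of_size (V : {set T}) (n : nat) : bool :=
  [exists t : n.-tuple T, is_dns V t].

(* maximum length of a DNS (any DNS has length <= #|T| by uniqueness) *)
Definition gamma_gr2 (V : {set T}) : nat :=
  \max_(n < #|T|.+1 | has_dns_of_size V n) n.

Definition is_mdns (V : {set T}) (S : seq T) : Prop :=
  is_dns V S /\ forall S', is_dns V S' -> size S' <= size S.

End Graph.

(* A DNS of G - v' is a DNS of G, since closed neighbourhoods in G - v' are
   those of G restricted to V(G) - v'.  Conversely, let S be a DNS of G.  The
   transposition of the false twins v and v' is an automorphism of G, so we may
   assume that v' occurs in S before v (or v does not occur).  Deleting v' then
   leaves a DNS of G - v': a vertex whose witness was v' can use v instead,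
   because N[v] and N[v'] differ only in v and v', and v' has already been
   counted whenever v has.  Hence S loses at most one vertex, and none at all
   when S avoids both twins. *)
From mathcomp Require Import all_boot perm.
Set Implicit Arguments. Unset Strict Implicit. Unset Printing Implicit Defensive.

Lemma size_rem_mem (A : eqType) (x : A) (s : seq A) :
  size s = size (rem x s) + (x \in s).
Proof.
have [xs|/rem_id -> //] := boolP (x \in s); last by rewrite addn0.
by rewrite size_rem // addn1 prednK // -has_predT; apply/hasP; exists x.
Qed.

Lemma mem_take_index_le (A : eqType) (x y : A) (s : seq A) k :
  index y s <= index x s -> x \in take k s -> y \in take k s.
Proof.
move=> le_yx xk; have xs := mem_take xk.
have ys : y \in s by rewrite -index_mem (leq_ltn_trans le_yx) // index_mem.
by rewrite in_take // (leq_ltn_trans le_yx) // -in_take.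
Qed.

Section DoubleNeighbourhoodSequences.
Variables (T : finType) (e : rel T).

Lemma Nclosed_subset (V W : {set T}) w : V \subset W -> Nclosed e V w \subset Nclosed e W w.
Proof. by move=> VW; apply/subsetP => u; rewrite !inE => /andP [/(subsetP VW) -> ->]. Qed.

Lemma count_Nclosed_filter (V W : {set T}) : V \subset W -> forall (a : pred T) u s,
  count (fun w => u \in Nclosed e V w) (filter a s)
  <= count (fun w => u \in Nclosed e W w) s.
Proof.
move=> VW a u s; rewrite count_filter; apply: sub_count => w /andP [uVw _].
exact: subsetP (Nclosed_subset w VW) u uVw.
Qed.

Lemma count_Nclosed u s : irreflexive e ->
  count (fun w => u \in Nclosed e [set: T] w) s = count_mem u s + count (e^~ u) s.
Proof.
move=> irr_e; rewrite -count_predUI (@eq_count _ (predI _ _) pred0) ?count_pred0.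
  by rewrite addn0; apply: eq_count => w; rewrite !inE eq_sym.
by move=> w /=; apply/andP => -[/eqP -> /=]; rewrite irr_e.
Qed.

Lemma dns_aux_subset (V W : {set T}) prev rest : V \subset W ->
  dns_aux e V prev rest -> dns_aux e W prev rest.
Proof.
move=> VW; elim: rest prev => //= x r IH prev /andP [/existsP [u /andP [ux cnt]] xr].
rewrite IH // andbT; apply/existsP; exists u.
rewrite (subsetP (Nclosed_subset x VW)) //=.
have uV : u \in V by move: ux; rewrite inE => /andP [].
rewrite -(eq_count (a1 := fun w => u \in Nclosed e V w)) // => w.
by rewrite !inE uV (subsetP VW).
Qed.

Lemma is_dns_subset (V W : {set T}) S : V \subset W -> is_dns e V S -> is_dns e W S.
Proof.
move=> VW /and3P [uS SV dS]; apply/and3P; split => //; last exact: dns_aux_subset dS.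
by apply/allP => x /(allP SV) /(subsetP VW).
Qed.

Lemma dns_aux_map (f : T -> T) prev rest : injective f -> {mono f : a b / e a b} ->
  dns_aux e [set: T] prev rest -> dns_aux e [set: T] (map f prev) (map f rest).
Proof.
move=> inj_f mono_f.
have fN a b : (f a \in Nclosed e [set: T] (f b)) = (a \in Nclosed e [set: T] b).
  by rewrite !inE (inj_eq inj_f) mono_f.
elim: rest prev => //= x r IH prev /andP [/existsP [u /andP [ux cnt]] xr].
rewrite -map_rcons IH // andbT; apply/existsP; exists (f u).
rewrite fN ux count_map (eq_count (a2 := fun w => u \in Nclosed e [set: T] w)) // => w /=.
by rewrite fN.
Qed.

Lemma is_dns_map (f : T -> T) S : injective f -> {mono f : a b / e a b} ->
  is_dns e [set: T] S -> is_dns e [set: T] (map f S).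
Proof.
move=> inj_f mono_f /and3P [uS _ dS]; apply/and3P; split.
- by rewrite map_inj_uniq.
- by apply/allP => x; rewrite inE.
- exact: dns_aux_map dS.
Qed.

Lemma dns_size_le_gamma V S : is_dns e V S -> size S <= gamma_gr2 e V.
Proof.
move=> dS; have size_lt : size S < #|T|.+1.
  by case/and3P: dS => uS _ _; rewrite ltnS -(card_uniqP uS) max_card.
have hasS : has_dns_of_size e V (size S) by apply/existsP; exists (in_tuple S).
exact: (@leq_bigmax_cond _ (fun i : 'I_#|T|.+1 => has_dns_of_size e V i)
  (fun i => nat_of_ord i) (Ordinal size_lt) hasS).
Qed.

Lemma gamma_attained V : exists2 S, is_dns e V S & size S = gamma_gr2 e V.
Proof.
rewrite /gamma_gr2; have has0 : 0 < #|fun i : 'I_#|T|.+1 => has_dns_of_size e V i|.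
  by apply/card_gt0P; exists ord0; apply/existsP; exists [tuple].
have [n /existsP [t dt] ->] := eq_bigmax_cond (fun i : 'I_#|T|.+1 => nat_of_ord i) has0.
by exists t; rewrite ?size_tuple.
Qed.

Lemma gamma_gr2_subset (V W : {set T}) : V \subset W -> gamma_gr2 e V <= gamma_gr2 e W.
Proof.
move=> VW; have [S dS <-] := gamma_attained V.
exact/dns_size_le_gamma/(is_dns_subset VW).
Qed.

Lemma mdns_size V S : is_mdns e V S -> size S = gamma_gr2 e V.
Proof.
case=> dS maxS; apply/eqP; rewrite eqn_leq dns_size_le_gamma //=.
by have [S' dS' <-] := gamma_attained V; apply: maxS.
Qed.

End DoubleNeighbourhoodSequences.

Section FalseTwins.
Variables (T : finType) (e : rel T) (v v' : T).
Hypotheses (graph_e : simple_graph e) (neq_vv' : v != v')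
  (twin_vv' : Nopen e v = Nopen e v').

Let V' := [set: T] :\ v'.
Let swap := tperm v v'.

Lemma edge_twin y : e y v = e y v'.
Proof.
case: graph_e => sym_e _; rewrite sym_e [e y v']sym_e.
by have := congr1 (fun A : {set T} => y \in A) twin_vv'; rewrite !inE.
Qed.

Lemma edge_swapr a b : e a (swap b) = e a b.
Proof. by case: tpermP => [->|->|]; rewrite ?edge_twin. Qed.

Lemma edge_swap : {mono swap : a b / e a b}.
Proof. by case: graph_e => sym_e _ a b; rewrite edge_swapr sym_e edge_swapr sym_e. Qed.

Lemma count_Nclosed_twin s : uniq s -> (v \in s -> v' \in s) ->
  count (fun w => v \in Nclosed e [set: T] w) s
  <= count (fun w => v' \in Nclosed e [set: T] w) s.
Proof.
case: graph_e => _ irr_e uS vs_v's.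
rewrite !count_Nclosed // !count_uniq_mem // (eq_count (@edge_twin)) leq_add2r.
by case: (v \in s) vs_v's => // ->.
Qed.

Lemma dns_aux_remove_twin prev rest : uniq (prev ++ rest) ->
  index v' (prev ++ rest) <= index v (prev ++ rest) ->
  dns_aux e [set: T] prev rest ->
  dns_aux e V' (filter (predC1 v') prev) (filter (predC1 v') rest).
Proof.
elim: rest prev => //= x r IH prev u_pr idx_pr /andP [/existsP [u /andP [ux cnt]] xr].
have {}IH : dns_aux e V' (filter (predC1 v') (rcons prev x)) (filter (predC1 v') r).
  by apply: IH; rewrite ?cat_rcons.
rewrite filter_rcons /= in IH.
have [xv' | x_v'] /= := eqVneq x v'; rewrite ?xv' ?eqxx ?x_v' in IH; first exact: IH.
rewrite IH andbT; apply/existsP.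
have count_V' w0 : count (fun w => w0 \in Nclosed e V' w) (filter (predC1 v') prev)
                   <= count (fun w => w0 \in Nclosed e [set: T] w) prev.
  exact: count_Nclosed_filter (subsetT V') _ w0 prev.
have [u_v' | u_v'] := eqVneq u v'; last first.
  exists u; move: ux; rewrite !inE u_v' /= => -> /=.
  exact: leq_trans (count_V' u) cnt.
exists v; have xv' : e x v' by move: ux; rewrite u_v' !inE eq_sym (negbTE x_v').
rewrite !inE neq_vv' edge_twin xv' orbT /=.
apply: leq_trans (count_V' v) _.
rewrite u_v' in cnt; apply: leq_trans (count_Nclosed_twin _ _) cnt.
  by move: u_pr; rewrite cat_uniq => /andP [].
by have := mem_take_index_le (k := size prev) idx_pr; rewrite take_size_cat.
Qed.

Lemma is_dns_remove_twin S : is_dns e [set: T] S -> index v' S <= index v S ->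
  is_dns e V' (rem v' S).
Proof.
move=> /and3P [uS _ dS] idx; rewrite rem_filter //; apply/and3P; split.
- exact: filter_uniq.
- by apply/allP => x; rewrite mem_filter /V' !inE andbT => /andP [].
- exact: (@dns_aux_remove_twin [::]).
Qed.

Lemma exists_dns_remove_twin S : is_dns e [set: T] S ->
  exists2 S', is_dns e V' S' & size S <= size S' + ((v \in S) || (v' \in S)).
Proof.
move=> dS; have [idx | idx] := leqP (index v' S) (index v S).
  exists (rem v' S); first exact: is_dns_remove_twin.
  by rewrite {1}(size_rem_mem v' S) leq_add2l; case: (v \in S); case: (v' \in S).
have swap_v : swap v = v' by exact: tpermL.
have swap_v' : swap v' = v by exact: tpermR.
have inj_swap : injective swap := @perm_inj _ swap.
have index_swap x : index (swap x) (map swap S) = index x S by rewrite index_map.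
exists (rem v' (map swap S)).
  apply: is_dns_remove_twin; first exact: is_dns_map inj_swap edge_swap dS.
  by rewrite -[X in index X _ <= _]swap_v -[X in _ <= index X _]swap_v' !index_swap ltnW.
rewrite -(size_map swap S) (size_rem_mem v') leq_add2l -{1}swap_v (mem_map inj_swap).
by case: (v \in S).
Qed.

End FalseTwins.

Theorem proposition7 (T : finType) (e : rel T) (Hg : simple_graph e)
    (v v' : T) (Hvv' : v != v') (Htwin : Nopen e v = Nopen e v') :
  gamma_gr2 e ([set: T] :\ v') <= gamma_gr2 e [set: T]
                               <= gamma_gr2 e ([set: T] :\ v') + 1
  /\ (forall S : seq T, is_mdns e [set: T] S ->
        gamma_gr2 e [set: T] = gamma_gr2 e ([set: T] :\ v') + 1 ->
        (v \in S) || (v' \in S)).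
Proof.
have remove_twin S := exists_dns_remove_twin Hg Hvv' Htwin (S := S).
split; first (apply/andP; split).
- exact/gamma_gr2_subset/subsetT.
- have [S dS <-] := gamma_attained e [set: T].
  have [S' dS' le_SS'] := remove_twin S dS.
  by apply: leq_trans le_SS' _; rewrite leq_add ?dns_size_le_gamma ?leq_b1.
- move=> S mS gamma_eq; have [dS _] := mS.
  have [S' dS' le_SS'] := remove_twin S dS.
  have := leq_trans le_SS' (leq_add (dns_size_le_gamma dS') (leqnn _)).
  by rewrite (mdns_size mS) gamma_eq leq_add2l lt0b.
Qed.
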